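(* Let $G=K_{n_1}\,\square\,\cdots\,\square\, K_{n_d}$, where each $n_j\geq 2$ is even and $d\geq 2$ is odd. Then for every vertex $u$ of $G$, $\uparrow^{2}G$ has Laplacian perfect state transfer between $(0,u)$ and $(1,u)$. In particular, if $q\geq 2$ is even (and $d\geq2$ is odd), then for every vertex $u$ of the Hamming graph $H(d,q)$, $\uparrow^{2}H(d,q)$ has Laplacian perfect state transfer between $(0,u)$ and $(1,u)$.
   Context: All graphs are simple, undirected and unweighted. $K_n$ is the complete graph on $n$ vertices. The Cartesian product $G\,\square\, H$ of graphs on $m$ and $n$ vertices is the graph with Laplacian $L(G)\otimes I_n+I_m\otimes L(H)$, where $L=D-A$. The Hamming graph $H(d,q)$ is the Cartesian product of $d$ copies of $K_q$. The blow-up $\uparrow^{2}G$ has vertex set $\mathbb{Z}_2\times V(G)$, with $(l,u)\sim(m,v)$ iff $u\sim v$ in $G$. A graph with Laplacian $L$ has Laplacian perfect state transfer between $a,b$ if $\exp(i\tau L)\mathbf{e}_a=\gamma\mathbf{e}_b$ for some $\tau>0$, $\gamma\in\mathbb{C}$. *)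

From HB Require Import structures.
From mathcomp Require Import all_boot all_order all_algebra.
From mathcomp Require Import all_classical all_reals all_analysis.
From mathcomp Require Import complex.
Set Implicit Arguments. Unset Strict Implicit. Unset Printing Implicit Defensive.
Import Order.TTheory GRing.Theory Num.Theory.
Import numFieldNormedType.Exports.
Local Open Scope ring_scope.
Local Open Scope complex_scope.
Local Open Scope classical_set_scope.

Record graph := Graph {
  vert : finType;
  adj : rel vert;
  adj_sym : symmetric adj;
  adj_irr : irreflexive adj }.

Definition Kadj (n : nat) : rel 'I_n := fun x y => x != y.
Lemma Kadj_sym n : symmetric (@Kadj n).
Proof. by move=> x y; rewrite /Kadj eq_sym. Qed.
Lemma Kadj_irr n : irreflexive (@Kadj n).
Proof. by move=> x; rewrite /Kadj eqxx. Qed.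
Definition K (n : nat) : graph := Graph (@Kadj_sym n) (@Kadj_irr n).

Definition cart_adj (G H : graph) : rel (vert G * vert H) :=
  fun x y => (adj x.1 y.1 && (x.2 == y.2)) || ((x.1 == y.1) && adj x.2 y.2).
Lemma cart_adj_sym G H : symmetric (@cart_adj G H).
Proof.
by move=> x y; rewrite /cart_adj adj_sym [adj x.2 _]adj_sym eq_sym [_.1 == _]eq_sym.
Qed.
Lemma cart_adj_irr G H : irreflexive (@cart_adj G H).
Proof. by move=> x; rewrite /cart_adj !adj_irr /= andbF. Qed.
Definition cart (G H : graph) : graph := Graph (@cart_adj_sym G H) (@cart_adj_irr G H).

Fixpoint prodK (n : nat) (s : seq nat) : graph :=
  match s with
  | [::] => K n
  | m :: s' => cart (K n) (prodK m s')
  end.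

(* K_{n_1} \square ... \square K_{n_d} for the list ns = [:: n_1; ...; n_d], d >= 1 *)
Definition cartK (ns : seq nat) : graph := prodK (head 0%N ns) (behead ns).

Definition hamming (d q : nat) : graph := cartK (nseq d q).

Definition blow_adj (G : graph) : rel ('I_2 * vert G) := fun x y => adj x.2 y.2.
Lemma blow_adj_sym G : symmetric (@blow_adj G).
Proof. by move=> x y; rewrite /blow_adj adj_sym. Qed.
Lemma blow_adj_irr G : irreflexive (@blow_adj G).
Proof. by move=> x; rewrite /blow_adj adj_irr. Qed.
Definition blowup2 (G : graph) : graph := Graph (@blow_adj_sym G) (@blow_adj_irr G).

Definition laplacian (R : realType) (G : graph) : 'M[R[i]^o]_#|vert G| :=
  \matrix_(i, j)
    ((if i == j then (#|[set y | adj (enum_val i) y]|)%:R else 0)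
      - (adj (enum_val i) (enum_val j))%:R).

Definition evec (R : realType) (G : graph) (a : vert G) : 'cV[R[i]^o]_#|vert G| :=
  delta_mx (enum_rank a) 0.

(* matrix power A^k (for square matrices of any size, including 0) *)
Definition mxpow (R : realType) (n : nat) (A : 'M[R[i]^o]_n) (k : nat) : 'M[R[i]^o]_n :=
  iter k (fun B => A *m B) 1%:M.

Definition is_mxexp (R : realType) (n : nat) (A M : 'M[R[i]^o]_n) : Prop :=
  (fun N : nat => \sum_(k < N) (k`!%:R)^-1 *: mxpow A k) @ \oo --> M.

Definition lap_pst (R : realType) (G : graph) (a b : vert G) : Prop :=
  exists tau : R, (0 < tau) /\ exists (gamma : R[i]^o) (M : 'M[R[i]^o]_#|vert G|),
    is_mxexp ((('i * tau%:C) : R[i]^o) *: laplacian R G) M /\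
    M *m evec R a = gamma *: evec R b.

(* Let G be k-regular with Laplacian L = sum_a m_a P_a, where the P_a are
   orthogonal idempotents summing to I and every m_a is even.  With
   Pi+ = J/2 and Pi- = I - J/2 on C^2, the Laplacian of the blow-up of G is
   2k (Pi- (x) I) + sum_a 2 m_a (Pi+ (x) P_a).  At time pi/2 the phases are
   (-1)^k on the first term and (-1)^(m_a) = 1 on the others, so for odd k the
   evolution is (Pi+ - Pi-) (x) I, which exchanges (0,u) and (1,u).  For even n,
   K_n is (n-1)-regular with eigenvalues 0 and n; Cartesian products add degrees
   and eigenvalues, so a product of an odd number of such complete graphs has
   odd degree and even Laplacian eigenvalues. *)

From HB Require Import structures.
From mathcomp Require Import all_boot all_order all_algebra.
From mathcomp Require Import all_classical all_reals all_analysis.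
From mathcomp Require Import complex.
From mathcomp Require Import ring.
Set Implicit Arguments. Unset Strict Implicit. Unset Printing Implicit Defensive.
Import Order.TTheory GRing.Theory Num.Theory.
Import numFieldNormedType.Exports.
Local Open Scope ring_scope.
Local Open Scope complex_scope.

Lemma sum_pair (R : nmodType) (I J : finType) (F : I * J -> R) :
  \sum_c F c = \sum_a \sum_b F (a, b).
Proof. by rewrite pair_bigA; apply: eq_bigr => -[]. Qed.

Lemma sum_I2 (R : nmodType) (F : 'I_2 -> R) : \sum_l F l = F ord0 + F ord_max.
Proof. by rewrite big_ord_recr big_ord1; congr (F _ + _); exact: val_inj. Qed.

Lemma I2_cases (l : 'I_2) : l = ord0 \/ l = ord_max.
Proof. by case: l => -[|[|//]] ?; [left|right]; exact: val_inj. Qed.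

Section Convergence.
Variable R : realType.
Local Open Scope classical_set_scope.

Lemma cvg_mx_entrywise (T : Type) (F : set_system T) (FF : Filter F)
    (U : puniformType) m n (f : T -> 'M[U]_(m, n)) (M : 'M[U]_(m, n)) :
  (forall i j, (fun t => f t i j) @ F --> M i j) -> f @ F --> M.
Proof.
move=> fM; apply/cvg_mx_entourageP => A entA.
have fMA (ij : 'I_m * 'I_n) : \forall t \near F, (M ij.1 ij.2, f t ij.1 ij.2) \in A.
  have fMij := (cvg_entourageP _ _).1 (fM ij.1 ij.2) A entA.
  by near=> t; rewrite inE; near: t; exact: fMij.
have fMA' : \forall t \near F, forall ij : 'I_m * 'I_n, (M ij.1 ij.2, f t ij.1 ij.2) \in A.
  exact: filter_forall.
by apply: filterS fMA' => t ftA i j; exact: (ftA (i, j)).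
Unshelve. all: by end_near.
Qed.

Lemma normc_real (x : R) : `|x%:C| = `|x|%:C.
Proof. by rewrite normc_def /= expr0n addr0 sqrtr_sqr. Qed.

Lemma cvg_real_complex (T : Type) (F : set_system T) (FF : Filter F) (a : T -> R) (A : R) :
  a @ F --> A -> (fun t => (a t)%:C : R[i]^o) @ F --> (A%:C : R[i]^o).
Proof.
move=> /cvgrPdist_le aA; apply/cvgrPdist_le => -[e ei]; rewrite ltcE /=.
move=> /andP[/eqP-> e0]; apply: filterS (aA e e0) => t.
by rewrite -rmorphB normc_real lecR.
Qed.

Lemma cvg_complex (T : Type) (F : set_system T) (FF : Filter F) (a b : T -> R) (A B : R) :
  a @ F --> A -> b @ F --> B ->
  (fun t => a t +i* b t : R[i]^o) @ F --> (A +i* B : R[i]^o).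
Proof.
move=> aA bB; have splitC (x y : R) : x +i* y = x%:C + 'i * y%:C by simpc.
rewrite splitC; under eq_fun do rewrite splitC.
by apply: cvgD; [|apply: cvgMr]; exact: cvg_real_complex.
Qed.

Lemma exp_series_coeff_i (t : R) k :
  (k`!%:R)^-1 * ('i * t%:C) ^+ k = cos_coeff t k +i* sin_coeff t k.
Proof.
have iX : 'i ^+ k = ((-1) ^+ k./2)%:C * 'i ^+ odd k :> R[i].
  rewrite -{1}(odd_double_half k) exprD -muln2 mulnC exprM sqr_i mulrC.
  by rewrite rmorphXn rmorphN1.
rewrite exprMn iX -rmorphXn -(rmorph_nat (real_complex R)) -fmorphV.
rewrite /cos_coeff /sin_coeff /=.
case kodd: (odd k) => /=.
  have -> : k.-1./2 = k./2 by rewrite -{1}(odd_double_half k) kodd /= doubleK.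
  by rewrite expr1 -exprnP; simpc; congr (_ *i); rewrite mulrC.
by rewrite -exprnP; simpc; rewrite mulrC.
Qed.

Lemma cvg_exp_series_i (t : R) :
  (fun N => \sum_(k < N) (k`!%:R)^-1 * ('i * t%:C) ^+ k : R[i]^o) @ \oo -->
  (cos t +i* sin t : R[i]^o).
Proof.
have -> : (fun N => \sum_(k < N) (k`!%:R)^-1 * ('i * t%:C) ^+ k : R[i]^o) =
    (fun N => series (cos_coeff t) N +i* series (sin_coeff t) N).
  apply/funext => N; rewrite /series /=.
  elim: N => [|N IH]; first by rewrite big_ord0 !big_geq.
  by rewrite big_ord_recr /= IH !big_nat_recr //= exp_series_coeff_i.
apply: cvg_complex.
  by rewrite cos.unlock; exact: is_cvg_series_cos_coeff.
by rewrite sin.unlock; exact: is_cvg_series_sin_coeff.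
Qed.

End Convergence.

(* Square matrices indexed by a finite type V are kept as functions
   V -> V -> C, so that Cartesian products and blow-ups act on them as tensor
   products; [ker_mx] transports them to the [enum_rank]-indexed matrices used
   by [laplacian]. *)
Section Kernels.
Variables (R : realType) (V : finType).
Local Notation ker := (V -> V -> R[i]).

Definition ker_mx (f : ker) : 'M[R[i]^o]_#|V| := \matrix_(i, j) f (enum_val i) (enum_val j).
Definition ker_mul (f g : ker) : ker := fun x y => \sum_z f x z * g z y.
Definition ker1 : ker := fun x y => (x == y)%:R.
Definition ker_comb (I : finType) (lam : I -> R[i]) (P : I -> ker) : ker :=
  fun x y => \sum_a lam a * P a x y.

Definition spectral_family (I : finType) (P : I -> ker) :=
  (forall a b x y, ker_mul (P a) (P b) x y = (a == b)%:R * P a x y) /\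
  (forall x y, \sum_a P a x y = ker1 x y).

Lemma ker_mx_mul f g : ker_mx f *m ker_mx g = ker_mx (ker_mul f g).
Proof.
apply/matrixP => i j; rewrite !mxE /ker_mul.
rewrite [RHS](reindex _ (onW_bij _ (enum_val_bij V))) /=.
by apply: eq_bigr => k _; rewrite !mxE.
Qed.

Lemma ker_mx1 : ker_mx ker1 = 1%:M.
Proof. by apply/matrixP => i j; rewrite !mxE /ker1 (inj_eq enum_val_inj). Qed.

Lemma sum_ker1l (F : V -> R[i]) x : \sum_z ker1 x z * F z = F x.
Proof.
rewrite (bigD1 x) //= /ker1 eqxx mul1r big1 ?addr0 // => z /negbTE.
by rewrite eq_sym => ->; rewrite mul0r.
Qed.

Lemma sum_ker1r (F : V -> R[i]) y : \sum_z F z * ker1 z y = F y.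
Proof.
rewrite (bigD1 y) //= /ker1 eqxx mulr1 big1 ?addr0 // => z /negbTE.
by move=> ->; rewrite mulr0.
Qed.

Section SpectralFamily.
Variables (I : finType) (P : I -> ker).
Hypothesis P_spectral : spectral_family P.

Lemma ker_comb1 x y : ker_comb (fun _ => 1) P x y = ker1 x y.
Proof. by case: P_spectral => _ <-; apply: eq_bigr => a _; rewrite mul1r. Qed.

Lemma ker_mul_comb (lam mu : I -> R[i]) x y :
  ker_mul (ker_comb lam P) (ker_comb mu P) x y = ker_comb (fun a => lam a * mu a) P x y.
Proof.
case: P_spectral => P_orth _.
have -> : ker_mul (ker_comb lam P) (ker_comb mu P) x y =
    \sum_a \sum_b lam a * mu b * ker_mul (P a) (P b) x y.
  rewrite /ker_mul /ker_comb; under eq_bigr do rewrite big_distrlr /=.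
  rewrite exchange_big; apply: eq_bigr => a _; rewrite exchange_big; apply: eq_bigr => b _.
  by rewrite mulr_sumr; apply: eq_bigr => z _; rewrite mulrACA.
apply: eq_bigr => a _; rewrite (bigD1 a) //= big1 ?addr0 => [|b b_neq_a].
  by rewrite P_orth eqxx mul1r.
by rewrite P_orth eq_sym (negbTE b_neq_a) mul0r mulr0.
Qed.

Lemma mxpow_ker_comb (lam : I -> R[i]) k :
  mxpow (ker_mx (ker_comb lam P)) k = ker_mx (ker_comb (fun a => lam a ^+ k) P).
Proof.
elim: k => [|k IHk].
  rewrite /mxpow /= -ker_mx1; congr ker_mx; apply/funext => x; apply/funext => y.
  by rewrite -ker_comb1; apply: eq_bigr => a _; rewrite expr0.
rewrite /mxpow iterS -/(mxpow _ k) IHk ker_mx_mul; congr ker_mx.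
apply/funext => x; apply/funext => y; rewrite ker_mul_comb.
by congr (ker_comb _ P x y); apply/funext => a; rewrite exprS.
Qed.

Lemma is_mxexp_ker_comb (lam : I -> R) (t : R) :
  is_mxexp (('i * t%:C : R[i]^o) *: ker_mx (ker_comb (fun a => (lam a)%:C) P))
    (ker_mx (ker_comb (fun a => cos (t * lam a) +i* sin (t * lam a)) P)).
Proof.
have -> : ('i * t%:C : R[i]^o) *: ker_mx (ker_comb (fun a => (lam a)%:C) P) =
    ker_mx (ker_comb (fun a => 'i * (t * lam a)%:C) P).
  apply/matrixP => i j; rewrite !mxE mulr_sumr; apply: eq_bigr => a _.
  by rewrite rmorphM mulrA mulrA.
rewrite /is_mxexp; under eq_fun do under eq_bigr do rewrite mxpow_ker_comb.
apply: cvg_mx_entrywise => i j; rewrite mxE.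
set x := enum_val i; set y := enum_val j.
have -> : (fun N => (\sum_(k < N) k`!%:R^-1 *:
      ker_mx (ker_comb (fun a => ('i * (t * lam a)%:C) ^+ k) P)) i j) =
    (fun N => \sum_a (\sum_(k < N) k`!%:R^-1 * ('i * (t * lam a)%:C) ^+ k) * P a x y).
  apply/funext => N; rewrite summxE.
  under eq_bigr do rewrite !mxE mulr_sumr.
  rewrite exchange_big /=; apply: eq_bigr => a _.
  by rewrite mulr_suml; under eq_bigr do rewrite mulrA.
apply: cvg_big => [|a _]; first exact: add_continuous.
by apply: cvgMl; exact: cvg_exp_series_i.
Qed.

End SpectralFamily.
End Kernels.
Arguments ker1 {R V}.

Section Tensor.
Variables (R : realType) (V W : finType).

Definition ker_tensor (A : V -> V -> R[i]) (B : W -> W -> R[i]) (p q : V * W) : R[i] :=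
  A p.1 q.1 * B p.2 q.2.

Lemma ker_mul_tensor A A' B B' p q :
  ker_mul (ker_tensor A B) (ker_tensor A' B') p q =
  ker_mul A A' p.1 q.1 * ker_mul B B' p.2 q.2.
Proof.
rewrite /ker_mul /ker_tensor big_distrlr /= pair_bigA /=.
by apply: eq_bigr => -[z1 z2] _; rewrite mulrACA.
Qed.

Lemma ker1_tensor p q : ker1 p q = ker_tensor ker1 ker1 p q.
Proof.
case: p q => [x1 x2] [y1 y2]; rewrite /ker1 /ker_tensor /= xpair_eqE.
by case: (x1 == y1); case: (x2 == y2); rewrite /= ?mulr1 ?mulr0.
Qed.

Lemma spectral_family_tensor (I J : finType)
    (P : I -> V -> V -> R[i]) (Q : J -> W -> W -> R[i]) :
  spectral_family P -> spectral_family Q ->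
  spectral_family (fun c : I * J => ker_tensor (P c.1) (Q c.2)).
Proof.
move=> [P_orth P_sum] [Q_orth Q_sum]; split.
  move=> [a1 a2] [b1 b2] p q; rewrite ker_mul_tensor P_orth Q_orth xpair_eqE /ker_tensor.
  by case: (a1 == b1); case: (a2 == b2); rewrite /= ?mul1r ?mul0r ?mulr0.
move=> p q; rewrite ker1_tensor /ker_tensor -P_sum -Q_sum big_distrlr pair_bigA /=.
by apply: eq_bigr => -[].
Qed.

End Tensor.

Definition deg (G : graph) (x : vert G) : nat := #|adj x|.

Lemma card_adj_set (G : graph) (x : vert G) : #|[set y | adj x y]%classic| = deg x.
Proof. by apply: eq_card => y; apply/idP/idP; rewrite in_setE. Qed.

Definition regular (G : graph) (k : nat) := forall x : vert G, deg x = k.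

Lemma deg_K n (x : vert (K n)) : deg x = n.-1.
Proof.
have := cardC1 x; rewrite card_ord => <-.
by apply: eq_card => y; rewrite !inE /= unfold_in /= /Kadj eq_sym.
Qed.

Lemma deg_cart (G H : graph) (x : vert (cart G H)) : deg x = (deg x.1 + deg x.2)%N.
Proof.
case: x => x1 x2; rewrite /deg -(cardsE (adj x1)) -(cardsE (adj x2)) /=.
pose A := finset.setX [set y in adj x1] [set x2].
pose B := finset.setX [set x1] [set y in adj x2].
have -> : #|@adj (cart G H) (x1, x2)| = #|A :|: B|.
  apply: eq_card => -[y1 y2]; rewrite !inE unfold_in /= /cart_adj /=.
  by rewrite [y2 == _]eq_sym [y1 == _]eq_sym.
have AB0 : #|A :&: B| = 0%N.
  apply: eq_card0 => -[y1 y2]; rewrite !inE /=.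
  by case: (y1 =P x1) => [->|_]; rewrite ?andbF // [x1 \in _]adj_irr.
by rewrite (cardsU A B) AB0 subn0 !cardsX !cards1 muln1 mul1n.
Qed.

Lemma deg_blowup (G : graph) (x : vert (blowup2 G)) : deg x = (deg x.2).*2.
Proof.
case: x => l x; rewrite /deg -(cardsE (adj x)) /=.
have := cardsX [set: 'I_2] [set y in adj x]; rewrite cardsT card_ord mul2n => <-.
by apply: eq_card => -[l' y]; rewrite !inE.
Qed.

Lemma deg_prodK n s (x : vert (prodK n s)) : deg x = (\sum_(m <- n :: s) m.-1)%N.
Proof.
elim: s n x => [|m s IHs] n x.
  by rewrite big_seq1 (@deg_K n x).
by rewrite (@deg_cart (K n) (prodK m s) x) (@deg_K n x.1) IHs !big_cons.
Qed.

Lemma odd_sum_predn (s : seq nat) :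
  all (fun n => (0 < n)%N && ~~ odd n) s -> odd (\sum_(n <- s) n.-1)%N = odd (size s).
Proof.
elim: s => [|n s IHs] /=; first by rewrite big_nil.
move=> /andP[/andP[n_gt0 n_even] /IHs s_odd]; rewrite big_cons oddD s_odd.
by case: n n_gt0 n_even => //= n _ /negbNE ->.
Qed.

Section Laplacian.
Variable R : realType.

Definition lap_ker (G : graph) (x y : vert G) : R[i] :=
  ker1 x y * (deg x)%:R - (adj x y)%:R.
Arguments lap_ker : clear implicits.

Lemma laplacian_ker_mx G : laplacian R G = ker_mx (lap_ker G).
Proof.
apply/matrixP => i j; rewrite !mxE card_adj_set /lap_ker /ker1 (inj_eq enum_val_inj).
by case: eqP => [->|_]; rewrite ?mul1r ?mul0r.
Qed.

Definition has_even_spectrum (G : graph) :=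
  exists (I : finType) (P : I -> vert G -> vert G -> R[i]) (m : I -> nat),
    [/\ spectral_family P, forall a, ~~ odd (m a)
      & forall x y, lap_ker G x y = ker_comb (fun a => (m a)%:R) P x y].

(* The projections orthogonal to the constants (eigenvalue n) and onto the
   constants (eigenvalue 0). *)
Definition K_proj (n : nat) (b : bool) (x y : 'I_n) : R[i] :=
  if b then ker1 x y - n%:R^-1 else n%:R^-1.
Arguments K_proj : clear implicits.

Lemma spectral_family_K_proj n : (0 < n)%N -> spectral_family (K_proj n).
Proof.
move=> n_gt0; have n_neq0 : n%:R != 0 :> R[i] by rewrite pnatr_eq0 -lt0n.
have sum_const (c : R[i]) : \sum_(z : 'I_n) c = n%:R * c.
  by rewrite sumr_const card_ord mulr_natl.
split=> [[] [] x y|x y]; rewrite /ker_mul /K_proj /=.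
- under eq_bigr do rewrite mulrBl !mulrBr.
  rewrite !sumrB (sum_ker1l (ker1^~ y)) (sum_ker1l (fun _ => n%:R^-1)).
  by rewrite (sum_ker1r (fun _ => n%:R^-1)) sum_const; field.
- under eq_bigr do rewrite mulrBl.
  by rewrite sumrB (sum_ker1l (fun _ => n%:R^-1)) sum_const; field.
- under eq_bigr do rewrite mulrBr.
  by rewrite sumrB (sum_ker1r (fun _ => n%:R^-1)) sum_const; field.
- by rewrite sum_const; field.
- by rewrite big_bool /= subrK.
Qed.

Lemma lap_ker_K n (x y : vert (K n)) :
  lap_ker (K n) x y = ker_comb (fun b => (if b then n else 0)%:R) (K_proj n) x y.
Proof.
have n_gt0 : (0 < n)%N := leq_ltn_trans (leq0n x) (ltn_ord x).
have n_neq0 : n%:R != 0 :> R[i] by rewrite pnatr_eq0 -lt0n.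
rewrite /lap_ker /ker_comb big_bool /= mul0r addr0 deg_K /K_proj /Kadj /ker1.
by rewrite -subn1 natrB //; case: (x == y) => /=; field.
Qed.

Lemma has_even_spectrum_K n : (0 < n)%N -> ~~ odd n -> has_even_spectrum (K n).
Proof.
move=> n_gt0 n_even; exists bool, (K_proj n), (fun b => if b then n else 0%N).
by split=> [|[]|]; [exact: spectral_family_K_proj|..|exact: lap_ker_K].
Qed.

Lemma lap_ker_cart (G H : graph) (p q : vert (cart G H)) :
  lap_ker (cart G H) p q =
  ker_tensor (lap_ker G) ker1 p q + ker_tensor ker1 (lap_ker H) p q.
Proof.
case: p q => [x1 x2] [y1 y2].
rewrite /lap_ker ker1_tensor /ker_tensor deg_cart /= natrD /cart_adj /ker1.
case: (x1 =P y1) => [<-|_]; case: (x2 =P y2) => [<-|_]; rewrite ?adj_irr /=;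
  by rewrite ?andbT ?andbF ?orbF /=; ring.
Qed.

Lemma has_even_spectrum_cart (G H : graph) :
  has_even_spectrum G -> has_even_spectrum H -> has_even_spectrum (cart G H).
Proof.
move=> [I [P [m [sP m_even lP]]]] [J [Q [m' [sQ m'_even lQ]]]].
exists (I * J)%type, (fun c => ker_tensor (P c.1) (Q c.2)), (fun c => m c.1 + m' c.2)%N.
split=> [|[a b]|p q]; first exact: spectral_family_tensor.
  by rewrite oddD (negbTE (m_even a)) (negbTE (m'_even b)).
case: sP sQ => [_ P_sum] [_ Q_sum].
rewrite lap_ker_cart /ker_tensor lP lQ -P_sum -Q_sum /ker_comb.
rewrite !big_distrlr -big_split sum_pair /=; apply: eq_bigr => a _.
by rewrite -big_split; apply: eq_bigr => b _ /=; rewrite natrD; ring.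
Qed.

(* [half_proj true] is Pi+ = J/2 and [half_proj false] is Pi- = I - J/2. *)
Definition half_proj (b : bool) (l l' : 'I_2) : R[i] := (if b || (l == l') then 1 else -1) / 2.

Lemma spectral_family_half_proj : spectral_family half_proj.
Proof.
have two_neq0 : 2 != 0 :> R[i] by rewrite pnatr_eq0.
split=> [b b' l l'|l l'].
  rewrite /ker_mul sum_I2 /half_proj /ker1.
  by case: (I2_cases l) => ->; case: (I2_cases l') => ->; case: b; case: b' => /=; field.
rewrite big_bool /half_proj /ker1.
by case: (I2_cases l) => ->; case: (I2_cases l') => -> /=; field.
Qed.

Lemma lap_ker_blowup (G : graph) k (I : finType) (P : I -> vert G -> vert G -> R[i])
    (m : I -> nat) :
  regular G k -> spectral_family P ->
  (forall x y, lap_ker G x y = ker_comb (fun a => (m a)%:R) P x y) ->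
  forall p q, lap_ker (blowup2 G) p q =
    ker_comb (fun c : bool * I => (if c.1 then (m c.2).*2 else k.*2)%:R)
      (fun c => ker_tensor (half_proj c.1) (P c.2)) p q.
Proof.
move=> G_reg [_ P_sum] lP [l x] [l' y].
have adjE : (adj x y)%:R = ker1 x y * k%:R - lap_ker G x y.
  by rewrite /lap_ker G_reg opprB addrC subrK.
have doubled : \sum_a (m a).*2%:R * (half_proj true l l' * P a x y) =
    2 * half_proj true l l' * \sum_a (m a)%:R * P a x y.
  by rewrite mulr_sumr; apply: eq_bigr => a _; rewrite -muln2 natrM; ring.
rewrite /ker_comb sum_pair big_bool /= /ker_tensor /= doubled -/(ker_comb _ P x y) -lP.
rewrite -!mulr_sumr P_sum /lap_ker deg_blowup G_reg /=.
rewrite ker1_tensor /ker_tensor /= /blow_adj /= adjE.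
rewrite /half_proj /ker1; case: (I2_cases l) => ->; case: (I2_cases l') => -> /=;
  by rewrite -muln2 natrM; field.
Qed.

Lemma expi_pi_half_double (j : nat) :
  cos (pi / 2 * (j.*2)%:R) +i* sin (pi / 2 * (j.*2)%:R) = (-1) ^+ j :> R[i].
Proof.
have -> : pi / 2 * (j.*2)%:R = 0 + pi *+ j :> R.
  by rewrite add0r -mulr_natr -muln2 natrM; field.
rewrite (alternatingn (@cosDpi R)) (alternatingn (@sinDpi R)) cos0 sin0 mulr1 mulr0.
by rewrite complexr0 rmorphXn rmorphN1.
Qed.

Lemma ker_mx_evec (G : graph) (f : vert G -> vert G -> R[i]) a :
  ker_mx f *m evec R a = \col_i f (enum_val i) a.
Proof.
apply/matrixP => i j; rewrite !mxE (bigD1 (enum_rank a)) //= !mxE eqxx (ord1 j) eqxx.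
rewrite mulr1 enum_rankK big1 ?addr0 // => r /negbTE r_neq.
by rewrite !mxE r_neq mulr0.
Qed.

Lemma blowup_pst (G : graph) k : regular G k -> odd k -> has_even_spectrum G ->
  forall u : vert G, @lap_pst R (blowup2 G) (ord0, u) (ord_max, u).
Proof.
move=> G_reg k_odd [I [P [m [sP m_even lP]]]] u.
pose Q (c : bool * I) := ker_tensor (half_proj c.1) (P c.2).
pose mu (c : bool * I) := if c.1 then m c.2 else k.
have sQ : spectral_family Q := spectral_family_tensor spectral_family_half_proj sP.
exists (pi / 2); split; first by rewrite divr_gt0 ?pi_gt0.
exists 1, (ker_mx (ker_comb (fun c => (-1) ^+ mu c) Q)); split.
  rewrite laplacian_ker_mx.
  have -> : lap_ker (blowup2 G) = ker_comb (fun c => ((mu c).*2%:R : R)%:C) Q.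
    apply/funext => p; apply/funext => q; rewrite (lap_ker_blowup G_reg sP lP).
    by apply: eq_bigr => -[[] a] _; rewrite rmorph_nat.
  have -> : (fun c => (-1) ^+ mu c : R[i]) =
      (fun c => cos (pi / 2 * (mu c).*2%:R) +i* sin (pi / 2 * (mu c).*2%:R)).
    by apply/funext => c; rewrite expi_pi_half_double.
  exact: is_mxexp_ker_comb.
case: sP => _ P_sum.
rewrite ker_mx_evec scale1r; apply/matrixP => i j; rewrite !mxE (ord1 j) eqxx andbT.
rewrite -(inj_eq enum_val_inj) enum_rankK; case: (enum_val i) => l x.
rewrite /ker_comb sum_pair big_bool /mu /Q /ker_tensor /= -signr_odd k_odd expr1.
under eq_bigr do rewrite -signr_odd (negbTE (m_even _)) expr0 mul1r.
rewrite -!mulr_sumr mulN1r -mulNr -mulrDl P_sum xpair_eqE /half_proj /ker1.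
by case: (I2_cases l) => -> /=; field.
Qed.

End Laplacian.

Lemma has_even_spectrum_prodK (R : realType) n s :
  all (fun m => (0 < m)%N && ~~ odd m) (n :: s) -> has_even_spectrum R (prodK n s).
Proof.
elim: s n => [|m s IHs] n /= /andP[/andP[n_gt0 n_even] s_even].
  exact: has_even_spectrum_K.
exact: has_even_spectrum_cart (has_even_spectrum_K R n_gt0 n_even) (IHs m s_even).
Qed.

Theorem corollary6 (R : realType) :
  (forall (ns : seq nat), (2 <= size ns)%N -> odd (size ns) ->
     all (fun n => (2 <= n)%N && ~~ odd n) ns ->
     forall u : vert (cartK ns),
       @lap_pst R (blowup2 (cartK ns)) (ord0, u) (ord_max, u)) /\
  (forall d q : nat, (2 <= d)%N -> odd d -> (2 <= q)%N -> ~~ odd q ->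
     forall u : vert (hamming d q),
       @lap_pst R (blowup2 (hamming d q)) (ord0, u) (ord_max, u)).
Proof.
(* The argument also covers d = 1. *)
have cartK_pst (ns : seq nat) : odd (size ns) ->
    all (fun n => (2 <= n)%N && ~~ odd n) ns ->
    forall u : vert (cartK ns), @lap_pst R (blowup2 (cartK ns)) (ord0, u) (ord_max, u).
  case: ns => [|n s] // s_odd ns_even.
  have ns_pos : all (fun m => (0 < m)%N && ~~ odd m) (n :: s).
    by apply: sub_all ns_even => m /andP[m_ge2 ->]; rewrite (leq_trans _ m_ge2).
  apply: (blowup_pst (@deg_prodK n s)); first by rewrite odd_sum_predn.
  exact: has_even_spectrum_prodK.
split=> [ns _|d q _ d_odd q_ge2 q_even]; first exact: cartK_pst.
by apply: cartK_pst; rewrite ?size_nseq // all_nseq q_ge2 q_even orbT.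
Qed.
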